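(* For every finite abelian $p$-group $H$, $N_{\mathrm{typical}}(H,\mathbb{F}_p)=0$, where $\mathbb{F}_p$ carries the trivial action.
   Context: For a finite abelian group $D$, subgroup $I$ with $D/I$ cyclic and finite $D$-module $M$: $\widehat D:=\hat{\mathbb{Z}}\times_{D/I}D$, $R(D,I,M):=\ker(H^2(D,M)\xrightarrow{\inf}H^2(\widehat D,M))$. $\mathcal{C}$ is the set of pairs $(D,I)$ with $D\le H$ generated by at most two elements, $I\le D$ cyclic with $D/I$ cyclic. $N_{\mathrm{typical}}(H,M):=\ker\bigl(H^2(H,M)\to\bigoplus_{(D,I)\in\mathcal{C}}H^2(D,M)/R(D,I,M)\bigr)$ (restriction maps). *)

From HB Require Import structures.
From mathcomp Require Import all_boot all_order all_algebra all_fingroup all_solvable.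
Set Implicit Arguments. Unset Strict Implicit. Unset Printing Implicit Defensive.
Import GRing.Theory.
Local Open Scope group_scope.

(* An element of Zhat is a compatible family (x_N)_{N >= 1}, x_N in Z/N;
   the coordinate at modulus k.+1 is [zc x k]. *)
Record zhat := Zhat {
  zc : nat -> nat;
  zc_lt : forall k, (zc k < k.+1)%N;
  zc_compat : forall k l, (k.+1 %| l.+1)%N -> (zc l %% k.+1 = zc k)%N }.

Lemma zadd_lt (a b : zhat) k : ((zc a k + zc b k) %% k.+1 < k.+1)%N.
Proof. by rewrite ltn_mod. Qed.

Lemma zadd_compat (a b : zhat) k l : (k.+1 %| l.+1)%N ->
  (((zc a l + zc b l) %% l.+1) %% k.+1 = (zc a k + zc b k) %% k.+1)%N.
Proof.
move=> kl; rewrite modn_dvdm // -modnDm !zc_compat // modnDm //.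
Qed.

Definition zadd (a b : zhat) : zhat :=
  @Zhat (fun k => (zc a k + zc b k) %% k.+1) (@zadd_lt a b) (@zadd_compat a b).

Section Cohomology.
Local Unset Implicit Arguments.
Variables (gT : finGroupType) (M : zmodType).
(* M is a G-module with trivial action throughout. *)

Definition cocycle2 (G : {set gT}) (f : gT -> gT -> M) : Prop :=
  forall x y z, x \in G -> y \in G -> z \in G ->
    (f y z - f (x * y)%g z + f x (y * z)%g - f x y = 0)%R.

Definition coboundary2 (G : {set gT}) (f : gT -> gT -> M) : Prop :=
  exists g : gT -> M, forall x y, x \in G -> y \in G ->
    f x y = (g y - g (x * y)%g + g x)%R.

(* The fibre product  Dhat = Zhat x_{D/I} D  for the surjection
   Zhat -> D/I,  a |-> c ^+ (a mod n),  n = #|D/I|,  c a generator of D/I. *)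
Definition in_hatD (D I : {set gT}) (c : coset_of I) (a : zhat) (d : gT) : bool :=
  (d \in D) && (coset I d == c ^+ zc a (#|D / I|).-1).

(* continuous (= locally constant, for the profinite topology) 1-cochains
   Dhat -> M, M discrete; by compactness these are exactly the functions
   factoring through some finite level Z/N x_{D/I} D. *)
Definition hat_continuous (D I : {set gT}) (c : coset_of I)
    (g : zhat -> gT -> M) : Prop :=
  exists k, forall a b d, in_hatD D I c a d -> in_hatD D I c b d ->
    zc a k = zc b k -> g a d = g b d.

(* The class of the cocycle f of D lies in
   R(D,I,M) = ker (inf : H^2(D,M) -> H^2(Dhat,M)):
   the inflated cocycle (x,y) |-> f (pi x) (pi y) is a continuous coboundary. *)
Definition in_R (D I : {set gT}) (c : coset_of I) (f : gT -> gT -> M) : Prop :=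
  exists g : zhat -> gT -> M, hat_continuous D I c g /\
    forall a d b e, in_hatD D I c a d -> in_hatD D I c b e ->
      f d e = (g b e - g (zadd a b) (d * e)%g + g a d)%R.

Definition typical_pair (H D I : {group gT}) : Prop :=
  [/\ D \subset H, exists x y, D = <<[set x; y]>> :> {set gT},
      I \subset D, cyclic I & cyclic (D / I)].

(* The class of the cocycle f of H lies in N_typical(H,M): for every
   (D,I) in C, res_D [f] lies in R(D,I,M)  (R computed with a surjection
   Zhat -> D/I given by some generator c of D/I; R does not depend on it). *)
Definition in_Ntypical (H : {group gT}) (f : gT -> gT -> M) : Prop :=
  forall D I : {group gT}, typical_pair H D I ->
    exists c : coset_of I, generator (D / I) c /\ in_R D I c f.

End Cohomology.

Arguments cocycle2 {gT M} G f.
Arguments coboundary2 {gT M} G f.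
Arguments in_hatD {gT} D I c a d.
Arguments hat_continuous {gT M} D I c g.
Arguments in_R {gT M} D I c f.
Arguments typical_pair {gT} H D I.
Arguments in_Ntypical {gT M} H f.

(* If the class of f lies in R(D,I,M), then f becomes a coboundary on the abelian
   group Dhat, which surjects onto D, so f is symmetric on D; taking D = <x,y> shows
   that f is symmetric on H.  Taking D = I cyclic, Dhat = Zhat x D retracts onto D, so
   f is a coboundary on every cyclic subgroup.  A symmetric cocycle on A \x B that is
   a coboundary on both factors is a coboundary, and H is a direct product of cyclic
   groups. *)

From HB Require Import structures.
From mathcomp Require Import all_boot all_order all_algebra all_fingroup all_solvable.
From Stdlib Require Import ProofIrrelevance FunctionalExtensionality.
Set Implicit Arguments.
Unset Strict Implicit.
Unset Printing Implicit Defensive.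
Import GRing.Theory.
Local Open Scope ring_scope.

Section Cochains.
Variables (gT : finGroupType) (M : zmodType).
Implicit Types (f : gT -> gT -> M) (g h : gT -> M).

Definition delta1 g : gT -> gT -> M := fun x y => g y - g (x * y)%g + g x.

Lemma delta1D g h x y :
  delta1 (fun z => g z + h z) x y = delta1 g x y + delta1 h x y.
Proof. by rewrite /delta1 opprD (addrACA (g y)) (addrACA (g y - _)). Qed.

Lemma delta1N g x y : delta1 (fun z => - g z) x y = - delta1 g x y.
Proof. by rewrite /delta1 !opprD !opprK. Qed.

Lemma delta1B g h x y :
  delta1 (fun z => g z - h z) x y = delta1 g x y - delta1 h x y.
Proof. by rewrite delta1D delta1N. Qed.

Lemma cocycle2E (G : {set gT}) f : cocycle2 G f ->
  {in G & G & G, forall x y z,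
    f x y + f (x * y)%g z = f y z + f x (y * z)%g}.
Proof.
move=> cf x y z xG yG zG; apply/esym/eqP.
by rewrite -subr_eq0 opprD (addrC (- f x y)) (addrACA (f y z)) addrA cf.
Qed.

End Cochains.

Section DirectProduct.
Variables (gT : finGroupType) (M : zmodType) (A B H : {group gT}).
Variable f : gT -> gT -> M.
Hypotheses (defH : (A \x B)%g = H) (cf : cocycle2 H f).
Hypothesis fC : {in H &, forall x y, f x y = f y x}.

Let sAH : A \subset H. Proof. by have [] := dprod_normal2 defH => /andP[]. Qed.
Let sBH : B \subset H. Proof. by have [_] := dprod_normal2 defH => /andP[]. Qed.
Let cAB a b : a \in A -> b \in B -> commute a b.
Proof.
have [_ _ cBA _] := dprodP defH.
by move=> aA bB; apply/commute_sym/(centsP cBA).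
Qed.

(* On A \x B, f is f|A + f|B up to the coboundary of a b |-> f a b.  This follows
   from four instances of the cocycle identity, glued along a1 b1 a2 = a1 a2 b1 and
   f b1 a2 = f a2 b1. *)
Lemma cocycle2_dprod_split a1 a2 b1 b2 :
  a1 \in A -> a2 \in A -> b1 \in B -> b2 \in B ->
  f (a1 * b1)%g (a2 * b2)%g
    = f a1 a2 + f b1 b2 - (f a2 b2 - f (a1 * a2)%g (b1 * b2)%g + f a1 b1).
Proof.
move=> a1A a2A b1B b2B.
have inH := subsetP sAH; have inH' := subsetP sBH.
have e1 := cocycle2E cf (groupM (inH _ a1A) (inH' _ b1B)) (inH _ a2A) (inH' _ b2B).
have e2 := cocycle2E cf (inH _ a1A) (inH' _ b1B) (inH _ a2A).
have e3 := cocycle2E cf (inH _ a1A) (inH _ a2A) (inH' _ b1B).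
have e4 := cocycle2E cf (groupM (inH _ a1A) (inH _ a2A)) (inH' _ b1B) (inH' _ b2B).
rewrite -(mulgA a1) -(cAB a2A b1B) (mulgA a1) in e1.
rewrite -(cAB a2A b1B) (fC (inH' _ b1B) (inH _ a2A)) -e3 in e2.
have sum3 : f a1 b1 + (f a2 b2 + f (a1 * b1)%g (a2 * b2)%g)
            = f a1 a2 + (f b1 b2 + f (a1 * a2)%g (b1 * b2)%g).
  by rewrite -e1 addrA e2 -addrA e4.
apply: (canRL (addrK _)); apply: (addIr (f (a1 * a2)%g (b1 * b2)%g)).
rewrite -[RHS]addrA -sum3 (addrAC (f a2 b2)) addrA subrK.
by rewrite addrC [RHS]addrC addrAC.
Qed.

Lemma coboundary2_dprod : coboundary2 A f -> coboundary2 B f -> coboundary2 H f.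
Proof.
move=> [gA hA] [gB hB].
have [_ _ _ tiAB] := dprodP defH.
pose gAB x := gA (divgr A B x) + gB (remgr A B x).
pose phi x := f (divgr A B x) (remgr A B x).
exists (fun x => gAB x - phi x) => x y xH yH.
change (f x y = delta1 (fun z => gAB z - phi z) x y).
rewrite delta1B delta1D /delta1 /phi.
have [a1 [b1 [a1A b1B -> _]]] := mem_dprod defH xH.
have [a2 [b2 [a2A b2B -> _]]] := mem_dprod defH yH.
have -> : (a1 * b1 * (a2 * b2) = a1 * a2 * (b1 * b2))%g.
  by rewrite -!mulgA (mulgA b1) -(cAB a2A b1B) -mulgA.
rewrite !divgrMid ?remgrMid ?groupM // -hA // -hB //.
exact: cocycle2_dprod_split.
Qed.

End DirectProduct.

Section AbelianGroups.
Variables (gT : finGroupType) (M : zmodType) (f : gT -> gT -> M).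

Lemma coboundary2_bigdprod (r : seq gT) (H : {group gT}) :
  \big[dprod/1%g]_(x <- r) <[x]>%g = H -> cocycle2 H f ->
  {in H &, forall x y, f x y = f y x} ->
  {in H, forall h, coboundary2 <[h]>%g f} -> coboundary2 H f.
Proof.
elim: r H => [|h r IHr] H.
  rewrite big_nil => <- _ _ _; exists (fun _ => f 1%g 1%g) => x y.
  by rewrite !inE => /eqP-> /eqP->; rewrite subrr add0r.
rewrite big_cons => defH cf fC cycH.
have [[_ K _ defK] _ _ _] := dprodP defH.
rewrite defK in defH.
have [/andP[sCH _] /andP[sKH _]] := dprod_normal2 defH.
have hH : h \in H by rewrite (subsetP sCH) ?cycle_id.
apply: (coboundary2_dprod defH cf fC (cycH h hH)).
apply: IHr; first by rewrite defK.
- by move=> x y z xK yK zK; apply: cf; apply: (subsetP sKH).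
- by move=> x y xK yK; apply: fC; apply: (subsetP sKH).
- by move=> z zK; apply: cycH; apply: (subsetP sKH).
Qed.

Lemma coboundary2_abelian (H : {group gT}) : abelian H -> cocycle2 H f ->
  {in H &, forall x y, f x y = f y x} ->
  {in H, forall h, coboundary2 <[h]>%g f} -> coboundary2 H f.
Proof.
move=> /abelian_structure[r defH _].
exact: coboundary2_bigdprod defH.
Qed.

End AbelianGroups.

Lemma zhat_eq (a b : zhat) : (forall k, zc a k = zc b k) -> a = b.
Proof.
case: a b => [za la ca] [zb lb cb] /= eab.
have e : za = zb by apply: functional_extensionality.
by subst zb; f_equal; apply: proof_irrelevance.
Qed.

Lemma zaddC (a b : zhat) : zadd a b = zadd b a.
Proof. by apply: zhat_eq => k /=; rewrite addnC. Qed.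

Lemma zconst_lt m k : (m %% k.+1 < k.+1)%N.
Proof. by rewrite ltn_mod. Qed.

Lemma zconst_compat m k l : (k.+1 %| l.+1)%N -> (m %% l.+1 %% k.+1 = m %% k.+1)%N.
Proof. exact: modn_dvdm. Qed.

Definition zconst m : zhat := Zhat (zconst_lt m) (@zconst_compat m).

Lemma zconstD m n : zadd (zconst m) (zconst n) = zconst (m + n).
Proof. by apply: zhat_eq => k /=; rewrite modnDm. Qed.

Section FibreProduct.
Variables (gT : finGroupType) (M : zmodType).
Implicit Types (D I : {group gT}) (f : gT -> gT -> M).

Lemma in_hatD_surj D I c d :
  generator (D / I) c -> d \in D -> exists a, in_hatD D I c a d.
Proof.
move=> /eqP defDI dD.
have /cycleP[m Id] : coset I d \in <[c]>%g by rewrite -defDI mem_quotient.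
exists (zconst m); rewrite /in_hatD dD defDI -orderE /=.
by rewrite prednK ?order_gt0 // expg_mod_order Id.
Qed.

Lemma in_R_commute D I c f : generator (D / I) c -> in_R D I c f ->
  {in D &, forall d e, commute d e -> f d e = f e d}.
Proof.
move=> gc [g [_ fg]] d e dD eD cde.
have [a ha] := in_hatD_surj gc dD; have [b hb] := in_hatD_surj gc eD.
rewrite (fg _ _ _ _ ha hb) (fg _ _ _ _ hb ha) zaddC cde.
by rewrite addrC addrA [RHS]addrAC.
Qed.

(* For I = D, Dhat is Zhat x D and d |-> (0, d) is a section of Dhat -> D. *)
Lemma in_R_id D c f : in_R D D c f -> coboundary2 D f.
Proof.
move=> [g [_ fg]]; exists (g (zconst 0)) => d e dD eD.
have hat0 x : x \in D -> in_hatD D D c (zconst 0) x.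
  by move=> xD; rewrite /in_hatD xD coset_id //= mod0n expg0.
by rewrite (fg _ _ _ _ (hat0 _ dD) (hat0 _ eD)) zconstD.
Qed.

Lemma typical_pair_cycle (H : {group gT}) h :
  h \in H -> typical_pair H <[h]>%G <[h]>%G.
Proof.
move=> hH; split; rewrite ?cycle_subG ?cycle_id ?cycle_cyclic //.
  by exists h, h; rewrite setUid.
exact: quotient_cyclic _ (cycle_cyclic h).
Qed.

Lemma typical_pair_abelian (H : {group gT}) x y : abelian H ->
  x \in H -> y \in H -> typical_pair H <<[set x; y]>>%G <[x]>%G.
Proof.
move=> cHH xH yH.
have xD : x \in <<[set x; y]>>%g by rewrite mem_gen // !inE eqxx.
have nxy : <[y]>%g \subset 'N(<[x]>)%g.
  by apply: subset_trans (sub_abelian_norm cHH _); rewrite cycle_subG.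
split; rewrite ?cycle_subG ?cycle_cyclic //.
- by rewrite gen_subG subUset !sub1set xH.
- by exists x, y.
apply: cyclicS (quotient_cyclic <[x]>%G (cycle_cyclic y)).
suff : (<<[set x; y]>> / <[x]> \subset <[y]> / <[x]>)%g by [].
rewrite -(quotientYidl nxy) quotientS // gen_subG subUset !sub1set.
by rewrite !mem_gen // !inE !cycle_id ?orbT.
Qed.

End FibreProduct.

Theorem mainTheorem13 (gT : finGroupType) (p : nat) (H : {group gT}) :
  prime p -> abelian H -> (p.-group H)%g ->
  forall f : gT -> gT -> 'F_p,
    cocycle2 H f -> in_Ntypical H f -> coboundary2 H f.
Proof.
move=> _ cHH _ f cf fN.
have fC : {in H &, forall x y, f x y = f y x}.
  move=> x y xH yH.
  have [c [gc fR]] := fN _ _ (typical_pair_abelian cHH xH yH).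
  apply: (in_R_commute gc fR); rewrite ?mem_gen ?inE ?eqxx ?orbT //.
  exact: (centsP cHH).
apply: coboundary2_abelian cHH cf fC _ => h hH.
have [c [_ fR]] := fN _ _ (typical_pair_cycle hH).
exact: in_R_id fR.
Qed.
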